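(* Let $\eta,\xi\in\Omega_n$ with $\eta\preceq\xi$ and let $i\in\{1,\dots,n\}$. Let $a=\min\{\xi(i-1),\xi(i+1)\}$, $b=\max\{\xi(i-1),\xi(i+1)\}$, $c=\min\{\eta(i-1),\eta(i+1)\}$, $d=\max\{\eta(i-1),\eta(i+1)\}$. Then $$0\le m(a,b)-m(c,d)\le\frac{a+b}{2}-\frac{c+d}{2},$$ where $m(x,y)$ denotes the expected value of a random variable with law $\mu_{xy}$.
   Context: Fix $\beta>0$ and integer $n\ge1$. $\Omega_n=\{0,\dots,n\}^n$, with boundary convention $\eta(0)=\eta(n+1)=0$ for every configuration. Partial order: $\eta\preceq\xi$ iff $\eta(i)\le\xi(i)$ for all $i\in\{1,\dots,n\}$. For integers $0\le x\le y\le n$, $\mu_{xy}$ is the distribution on $\{0,\dots,n\}$ with $\mu_{xy}(j)\propto e^{-2\beta(x-j)}$ for $0\le j<x$, $\mu_{xy}(j)\propto 1$ for $x\le j\le y$, and $\mu_{xy}(j)\propto e^{-2\beta(j-y)}$ for $y<j\le n$. Thus $m(a,b)$ and $m(c,d)$ are the expected new heights at $i$ after a column (heat-bath) update at position $i$ in configurations $\xi$ and $\eta$ respectively, for the SOS Gibbs distribution $\mu(\eta)\propto\exp\{-\beta\sum_{k=1}^{n+1}|\eta(k-1)-\eta(k)|\}$. *)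

From Stdlib Require Import Reals Lra Lia Arith Bool.
Open Scope R_scope.

(* Values at other indices are ignored:
   the boundary convention eta(0)=eta(n+1)=0 is imposed by [ext]. *)
Definition in_Omega (n : nat) (eta : nat -> nat) : Prop :=
  forall k, (1 <= k <= n)%nat -> (eta k <= n)%nat.

Definition ext (n : nat) (eta : nat -> nat) (k : nat) : nat :=
  if andb (1 <=? k)%nat (k <=? n)%nat then eta k else 0%nat.

Definition cfg_le (n : nat) (eta xi : nat -> nat) : Prop :=
  forall k, (1 <= k <= n)%nat -> (eta k <= xi k)%nat.

Definition mu_w (beta : R) (x y j : nat) : R :=
  if (j <? x)%nat then exp (- 2 * beta * (INR x - INR j))
  else if (j <=? y)%nat then 1
  else exp (- 2 * beta * (INR j - INR y)).

Definition mu_xy (n : nat) (beta : R) (x y j : nat) : R :=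
  mu_w beta x y j / sum_f_R0 (fun k => mu_w beta x y k) n.

Definition m_xy (n : nat) (beta : R) (x y : nat) : R :=
  sum_f_R0 (fun j => INR j * mu_xy n beta x y j) n.

From Stdlib Require Import Reals Lra Lia.
Open Scope R_scope.

(* With q = exp (-2 beta), m(x,y) is the mean of the weights q^(x-j), 1,
   q^(j-y) on the left slope, the plateau [x,y] and the right slope.  Raising
   y by one multiplies the weights above y by 1/q, and an explicit computation
   shows that the mean then grows by between 0 and 1/2; the estimate rests on
   a quadratic inequality between the mass and the distance moment of the
   weights below y, which holds in the geometric case y = x and is preserved
   as y grows.  Reflecting heights j -> n - j turns raising x into raising y.
   Since c <= a <= b and c <= d <= b, walking by unit steps from (c,d) to
   (c,b) and then to (a,b) gives both bounds. *)

Definition weight (q : R) (x y j : nat) : R :=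
  if (j <? x)%nat then q ^ (x - j)
  else if (j <=? y)%nat then 1 else q ^ (j - y).

(* The slack (L + q G)(L + G) - 2 (1 - q) G D - 2 G L of the bound 1/2 in
   [mean_shift_bounds], where 2 G L bounds the term 2 (1 - q) (G + E) L. *)
Definition half_margin (q L D G : R) : R :=
  L ^ 2 - (1 - q) * G * L - 2 * (1 - q) * G * D + q * G ^ 2.

(* L and D are the mass and the moment sum (Y - j) w_j of the weights w_j at
   heights j <= Y, and G, E the sums of q^i and i q^i over the heights Y + 1 + i
   above, where the weight is q^(i+1) before and q^i after the upper plateau
   end Y is raised to Y + 1; the two quotients are the corresponding means. *)
Lemma mean_shift_bounds q L D G E Y :
  0 < q < 1 -> 1 <= L -> 0 <= D -> 0 <= G -> 0 <= E ->
  (1 - q) * G <= 1 -> (1 - q) * E <= G - 1 -> 0 <= half_margin q L D G ->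
  0 <= (Y * L - D + ((Y + 1) * G + E)) / (L + G)
       - (Y * L - D + q * ((Y + 1) * G + E)) / (L + q * G) <= 1 / 2.
Proof.
  unfold half_margin; intros Hq HL HD HG HE HqG HqE Hmargin.
  set (N := (1 - q) * (G * D + (G + E) * L)).
  set (P := (L + q * G) * (L + G)).
  assert (HP : 0 < P) by (unfold P; nra).
  assert (Hdiff : (Y * L - D + ((Y + 1) * G + E)) / (L + G)
       - (Y * L - D + q * ((Y + 1) * G + E)) / (L + q * G) = N * / P)
    by (unfold N, P; field; nra).
  assert (HN : 0 <= N).
  { unfold N; apply Rmult_le_pos; [lra|].
    apply Rplus_le_le_0_compat; apply Rmult_le_pos; lra. }
  assert (HN2 : 2 * N <= P).
  { assert ((1 - q) * (G + E) * L <= G * L) by nra. unfold N, P. nra. }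
  rewrite Hdiff; split.
  - apply Rle_mult_inv_pos; lra.
  - assert (Hrest : 1 / 2 - N * / P = (P - 2 * N) * / (2 * P)) by (field; lra).
    assert (0 <= (P - 2 * N) * / (2 * P)) by (apply Rle_mult_inv_pos; lra).
    lra.
Qed.

Lemma telescope_half_bounds (f : nat -> R) lo k :
  (forall j, (lo <= j < lo + k)%nat -> 0 <= f (S j) - f j <= 1 / 2) ->
  0 <= f (lo + k)%nat - f lo <= INR k / 2.
Proof.
  induction k as [|k IH]; intros Hstep.
  - rewrite Nat.add_0_r; simpl; lra.
  - rewrite Nat.add_succ_r, S_INR.
    assert (Hlast := Hstep (lo + k)%nat ltac:(lia)).
    assert (Hprev : 0 <= f (lo + k)%nat - f lo <= INR k / 2)
      by (apply IH; intros j Hj; apply Hstep; lia).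
    lra.
Qed.

Lemma sum_f_R0_rev (f : nat -> R) N :
  sum_f_R0 f N = sum_f_R0 (fun j => f (N - j)%nat) N.
Proof.
  revert f; induction N as [|N IH]; intros f; [reflexivity|].
  rewrite decomp_sum by lia; simpl pred.
  rewrite IH, tech5, Nat.sub_diag, Rplus_comm.
  f_equal; apply sum_eq; intros j Hj; f_equal; lia.
Qed.

Section Weights.

Variable q : R.
Hypothesis q_pos : 0 < q.
Hypothesis q_lt1 : q < 1.

Lemma weight_pos x y j : 0 < weight q x y j.
Proof.
  unfold weight; destruct (j <? x)%nat; [apply pow_lt; lra|].
  destruct (j <=? y)%nat; [lra|apply pow_lt; lra].
Qed.

Lemma weight_diag x j : (j <= x)%nat -> weight q x x j = q ^ (x - j).
Proof.
  intros Hj; unfold weight.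
  destruct (Nat.ltb_spec j x); [reflexivity|].
  destruct (Nat.leb_spec j x); [|lia].
  replace (x - j)%nat with 0%nat by lia; reflexivity.
Qed.

Lemma weight_plateau x y j : (x <= j <= y)%nat -> weight q x y j = 1.
Proof.
  intros Hj; unfold weight.
  destruct (Nat.ltb_spec j x); [lia|].
  destruct (Nat.leb_spec j y); [reflexivity|lia].
Qed.

Lemma weight_tail x y i : (x <= y)%nat -> weight q x y (y + i) = q ^ i.
Proof.
  intros Hxy; unfold weight.
  destruct (Nat.ltb_spec (y + i) x); [lia|].
  destruct (Nat.leb_spec (y + i) y).
  - replace i with 0%nat by lia; reflexivity.
  - f_equal; lia.
Qed.

Lemma weight_succ_top x y j : (j <= y)%nat -> weight q x (S y) j = weight q x y j.
Proof.
  intros Hj; unfold weight.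
  destruct (Nat.ltb_spec j x); [reflexivity|].
  destruct (Nat.leb_spec j (S y)); [|lia].
  destruct (Nat.leb_spec j y); [reflexivity|lia].
Qed.

Lemma weight_reflect n x y j : (x <= y <= n)%nat -> (j <= n)%nat ->
  weight q x y (n - j) = weight q (n - y) (n - x) j.
Proof.
  intros Hxy Hj; unfold weight.
  destruct (Nat.ltb_spec (n - j) x).
  - destruct (Nat.ltb_spec j (n - y)); [lia|].
    destruct (Nat.leb_spec j (n - x)); [lia|].
    f_equal; lia.
  - destruct (Nat.ltb_spec j (n - y)); [|destruct (Nat.leb_spec (n - j) y)].
    + destruct (Nat.leb_spec (n - j) y); [lia|]. f_equal; lia.
    + destruct (Nat.leb_spec j (n - x)); [reflexivity|lia].
    + lia.
Qed.

Definition geom k := sum_f_R0 (fun i => q ^ i) k.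
Definition geom_moment k := sum_f_R0 (fun i => INR i * q ^ i) k.

Lemma geom_moment_mul k :
  (1 - q) * geom_moment k = geom k - 1 - INR k * q ^ S k.
Proof.
  unfold geom, geom_moment; induction k as [|k IH]; [simpl; ring|].
  rewrite !tech5, Rmult_plus_distr_l, IH, S_INR; simpl; ring.
Qed.

Lemma geom_bounds k :
  1 <= geom k /\ (1 - q) * geom k <= 1 /\
  0 <= geom_moment k /\ (1 - q) * geom_moment k <= geom k - 1.
Proof.
  assert (Hgeom : (1 - q) * geom k = 1 - q ^ S k).
  { unfold geom; rewrite (tech3 q k) by lra; field; lra. }
  assert (Hpow : forall m, 0 < q ^ m) by (intro; apply pow_lt; lra).
  assert (0 <= INR k * q ^ S k) by (apply Rmult_le_pos; [apply pos_INR|left; apply Hpow]).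
  assert (Hmoment := geom_moment_mul k).
  assert (0 <= geom_moment k).
  { apply cond_pos_sum; intro i; apply Rmult_le_pos; [apply pos_INR|left; apply Hpow]. }
  assert (q ^ S k <= q).
  { assert (q ^ k <= 1) by (rewrite <- (pow1 k); apply pow_incr; lra).
    simpl; nra. }
  assert (Hq1 : 0 < 1 - q) by lra.
  repeat split; try lra.
  - apply (Rmult_le_reg_l (1 - q)); lra.
  - pose proof (Hpow (S k)); lra.
Qed.

Definition left_mass x y := sum_f_R0 (weight q x y) y.
Definition left_moment x y := sum_f_R0 (fun j => (INR y - INR j) * weight q x y j) y.

Lemma left_mass_diag x : left_mass x x = geom x.
Proof.
  unfold left_mass, geom; rewrite sum_f_R0_rev; apply sum_eq; intros j Hj.
  rewrite weight_diag by lia; f_equal; lia.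
Qed.

Lemma left_moment_diag x : left_moment x x = geom_moment x.
Proof.
  unfold left_moment, geom_moment; rewrite sum_f_R0_rev; apply sum_eq; intros j Hj.
  rewrite weight_diag, minus_INR by lia.
  replace (x - (x - j))%nat with j by lia; ring.
Qed.

Lemma left_mass_succ x y : (x <= y)%nat -> left_mass x (S y) = left_mass x y + 1.
Proof.
  intros Hxy; unfold left_mass; rewrite tech5, weight_plateau by lia.
  f_equal; apply sum_eq; intros j Hj; apply weight_succ_top; lia.
Qed.

Lemma left_moment_succ x y : (x <= y)%nat ->
  left_moment x (S y) = left_moment x y + left_mass x y.
Proof.
  intros Hxy; unfold left_moment, left_mass.
  rewrite tech5, Rminus_diag, Rmult_0_l, Rplus_0_r, <- plus_sum.
  apply sum_eq; intros j Hj; rewrite weight_succ_top, S_INR by lia; ring.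
Qed.

Lemma left_invariant x y : (x <= y)%nat ->
  1 <= left_mass x y /\ 0 <= left_moment x y /\
  forall G, 0 <= G -> (1 - q) * G <= 1 ->
    0 <= half_margin q (left_mass x y) (left_moment x y) G.
Proof.
  unfold half_margin; induction 1 as [|y Hxy IH].
  - rewrite left_mass_diag, left_moment_diag.
    destruct (geom_bounds x) as (HL & HqL & HD & HqD).
    repeat split; auto; intros G HG HqG.
    (* the margin is (L - G)^2 plus two nonnegative products *)
    assert (0 <= G * (2 - (1 - q) * geom x - (1 - q) * G)) by (apply Rmult_le_pos; lra).
    assert (0 <= G * (geom x - 1 - (1 - q) * geom_moment x)) by (apply Rmult_le_pos; lra).
    pose proof (pow2_ge_0 (geom x - G)); nra.
  - rewrite left_mass_succ, left_moment_succ by lia.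
    destruct IH as (HL & HD & Hmargin).
    repeat split; try lra; intros G HG HqG.
    specialize (Hmargin G HG HqG).
    (* the step adds (1 - (1 - q) G) (2 L + 1) to the margin *)
    assert (0 <= (1 - (1 - q) * G) * (2 * left_mass x y + 1)) by (apply Rmult_le_pos; lra).
    nra.
Qed.

Definition mass n x y := sum_f_R0 (weight q x y) n.
Definition moment n x y := sum_f_R0 (fun j => INR j * weight q x y j) n.
Definition mean n x y := moment n x y / mass n x y.

Lemma mass_pos n x y : 0 < mass n x y.
Proof.
  unfold mass; induction n as [|n IH]; simpl; [apply weight_pos|].
  pose proof (weight_pos x y (S n)); lra.
Qed.

Lemma tail_moment c Y K :
  sum_f_R0 (fun i => (Y + INR i) * (c * q ^ i)) K = c * (Y * geom K + geom_moment K).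
Proof.
  unfold geom, geom_moment; induction K as [|K IH]; simpl; [ring|].
  rewrite IH; ring.
Qed.

Lemma sums_split_at_top w c n x y : (y < n)%nat ->
  (forall j, (j <= y)%nat -> w j = weight q x y j) ->
  (forall i, w (S y + i)%nat = c * q ^ i) ->
  sum_f_R0 w n = left_mass x y + c * geom (n - S y) /\
  sum_f_R0 (fun j => INR j * w j) n =
    INR y * left_mass x y - left_moment x y
    + c * ((INR y + 1) * geom (n - S y) + geom_moment (n - S y)).
Proof.
  intros Hyn Hleft Htail; rewrite !(tech2 _ y n Hyn); split.
  - unfold left_mass, geom; rewrite scal_sum; f_equal; apply sum_eq; intros j Hj.
    + apply Hleft; lia.
    + rewrite Htail; ring.
  - rewrite <- tail_moment; unfold left_mass, left_moment.
    rewrite scal_sum, <- minus_sum; f_equal; apply sum_eq; intros j Hj.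
    + rewrite Hleft by lia; ring.
    + rewrite Htail, plus_INR, S_INR; ring.
Qed.

Lemma mean_succ_top_bounds n x y : (x <= y < n)%nat ->
  0 <= mean n x (S y) - mean n x y <= 1 / 2.
Proof.
  intros Hxy.
  assert (Htail : forall i, weight q x y (S y + i) = q * q ^ i).
  { intros i; replace (S y + i)%nat with (y + S i)%nat by lia.
    rewrite weight_tail by lia; reflexivity. }
  assert (Htail' : forall i, weight q x (S y) (S y + i) = 1 * q ^ i).
  { intros i; rewrite weight_tail by lia; ring. }
  destruct (sums_split_at_top _ _ n x y ltac:(lia) (fun j _ => eq_refl) Htail)
    as [Hmass Hmoment].
  destruct (sums_split_at_top _ _ n x y ltac:(lia) (weight_succ_top x y) Htail')
    as [Hmass' Hmoment'].
  unfold mean, mass, moment; rewrite Hmass, Hmoment, Hmass', Hmoment', !Rmult_1_l.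
  destruct (left_invariant x y) as (HL & HD & Hmargin); [lia|].
  destruct (geom_bounds (n - S y)) as (HG & HqG & HE & HqE).
  apply mean_shift_bounds; try apply Hmargin; lra.
Qed.

Lemma mass_reflect n x y : (x <= y <= n)%nat ->
  mass n x y = mass n (n - y) (n - x).
Proof.
  intros Hxy; unfold mass; rewrite sum_f_R0_rev; apply sum_eq; intros j Hj.
  apply weight_reflect; lia.
Qed.

Lemma moment_reflect n x y : (x <= y <= n)%nat ->
  moment n x y = INR n * mass n (n - y) (n - x) - moment n (n - y) (n - x).
Proof.
  intros Hxy; unfold moment, mass; rewrite sum_f_R0_rev, scal_sum, <- minus_sum.
  apply sum_eq; intros j Hj; rewrite weight_reflect, minus_INR by lia; ring.
Qed.

Lemma mean_reflect n x y : (x <= y <= n)%nat ->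
  mean n x y = INR n - mean n (n - y) (n - x).
Proof.
  intros Hxy; unfold mean; rewrite (moment_reflect n x y), (mass_reflect n x y) by lia.
  pose proof (mass_pos n (n - y) (n - x)); field; lra.
Qed.

Lemma mean_succ_bottom_bounds n x y : (x < y <= n)%nat ->
  0 <= mean n (S x) y - mean n x y <= 1 / 2.
Proof.
  intros Hxy; rewrite (mean_reflect n (S x) y), (mean_reflect n x y) by lia.
  replace (n - x)%nat with (S (n - S x)) by lia.
  pose proof (mean_succ_top_bounds n (n - y) (n - S x) ltac:(lia)); lra.
Qed.

Lemma mean_increment_bounds n a b c d :
  (c <= a <= b)%nat -> (c <= d <= b)%nat -> (b <= n)%nat ->
  0 <= mean n a b - mean n c d <= (INR a + INR b) / 2 - (INR c + INR d) / 2.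
Proof.
  intros Hab Hcd Hbn.
  assert (Htop := telescope_half_bounds (fun y => mean n c y) d (b - d)).
  assert (Hbottom := telescope_half_bounds (fun x => mean n x b) c (a - c)).
  simpl in Htop, Hbottom.
  replace (d + (b - d))%nat with b in Htop by lia.
  replace (c + (a - c))%nat with a in Hbottom by lia.
  rewrite minus_INR in Htop, Hbottom by lia.
  assert (0 <= mean n c b - mean n c d <= (INR b - INR d) / 2)
    by (apply Htop; intros j Hj; apply mean_succ_top_bounds; lia).
  assert (0 <= mean n a b - mean n c b <= (INR a - INR c) / 2)
    by (apply Hbottom; intros j Hj; apply mean_succ_bottom_bounds; lia).
  split; lra.
Qed.

End Weights.

Lemma mu_w_weight beta x y j :
  mu_w beta x y j = weight (exp (- 2 * beta)) x y j.
Proof.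
  assert (Hexp : forall k, exp (- 2 * beta * INR k) = exp (- 2 * beta) ^ k).
  { intros k; rewrite <- Rpower_pow by apply exp_pos.
    unfold Rpower; rewrite ln_exp, Rmult_comm; reflexivity. }
  unfold mu_w, weight.
  destruct (Nat.ltb_spec j x); [rewrite <- minus_INR by lia; apply Hexp|].
  destruct (Nat.leb_spec j y); [reflexivity|].
  rewrite <- minus_INR by lia; apply Hexp.
Qed.

Lemma m_xy_mean n beta x y : m_xy n beta x y = mean (exp (- 2 * beta)) n x y.
Proof.
  unfold m_xy, mu_xy, mean, moment, mass.
  rewrite (sum_eq (fun k => mu_w beta x y k) _ n (fun k _ => mu_w_weight beta x y k)).
  unfold Rdiv; rewrite (Rmult_comm (sum_f_R0 (fun j => _) n)), scal_sum.
  apply sum_eq; intros j Hj; rewrite mu_w_weight; ring.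
Qed.

Lemma ext_le_n n eta k : in_Omega n eta -> (ext n eta k <= n)%nat.
Proof.
  intros Heta; unfold ext.
  destruct (Nat.leb_spec 1 k), (Nat.leb_spec k n); simpl; try lia; apply Heta; lia.
Qed.

Lemma ext_monotone n eta xi k : cfg_le n eta xi -> (ext n eta k <= ext n xi k)%nat.
Proof.
  intros Hle; unfold ext.
  destruct (Nat.leb_spec 1 k), (Nat.leb_spec k n); simpl; try lia; apply Hle; lia.
Qed.

Theorem corollary3p3 (beta : R) (n : nat) (eta xi : nat -> nat) (i : nat) :
  0 < beta -> (1 <= n)%nat ->
  in_Omega n eta -> in_Omega n xi -> cfg_le n eta xi ->
  (1 <= i <= n)%nat ->
  let a := Nat.min (ext n xi (i - 1)) (ext n xi (i + 1)) in
  let b := Nat.max (ext n xi (i - 1)) (ext n xi (i + 1)) in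
  let c := Nat.min (ext n eta (i - 1)) (ext n eta (i + 1)) in
  let d := Nat.max (ext n eta (i - 1)) (ext n eta (i + 1)) in
  0 <= m_xy n beta a b - m_xy n beta c d /\
  m_xy n beta a b - m_xy n beta c d <=
    (INR a + INR b) / 2 - (INR c + INR d) / 2.
Proof.
  intros Hbeta _ _ Hxi Hle _ a b c d.
  assert (Hq : 0 < exp (- 2 * beta) < 1).
  { split; [apply exp_pos|rewrite <- exp_0; apply exp_increasing; lra]. }
  pose proof (ext_le_n n xi (i - 1) Hxi); pose proof (ext_le_n n xi (i + 1) Hxi).
  pose proof (ext_monotone n eta xi (i - 1) Hle).
  pose proof (ext_monotone n eta xi (i + 1) Hle).
  rewrite !m_xy_mean.
  apply mean_increment_bounds; try lra; unfold a, b, c, d; lia.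
Qed.
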